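(* Let $H$ be a nonlocal vertex bialgebra, $U$ a nonlocal vertex (left) $H$-module-algebra, and $V$ a nonlocal vertex (left) $H$-comodule-algebra with coaction $\rho$. Define a linear map $R(x):V\otimes U\to U\otimes V\otimes\mathbb C((x))$ by $$R(x)(v\otimes u)=\sum_i Y(h_i,-x)u\otimes v_i\quad\text{where }\rho(v)=\sum_i h_i\otimes v_i .$$ Then $R(x)$ is a twisting operator for the pair $(U,V)$, and the smash product $U\sharp V$ coincides with the twisted tensor product $U\otimes_RV$ (same underlying space, vacuum and vertex operator map).
   Context: All vector spaces are over $\mathbb{C}$. A nonlocal vertex algebra is a vector space $V$ with a linear map $Y(\cdot,x):V\to \mathrm{Hom}(V,V((x)))$, $v\mapsto Y(v,x)=\sum_{n\in\mathbb Z}v_nx^{-n-1}$, and a vector $\mathbf 1\in V$ such that for all $v$: $Y(\mathbf 1,x)v=v$, $Y(v,x)\mathbf 1\in V[[x]]$, $\lim_{x\to0}Y(v,x)\mathbf 1=v$; and for all $u,v,w$ there is $k\ge0$ with $(x_0+x_2)^kY(u,x_0+x_2)Y(v,x_2)w=(x_0+x_2)^kY(Y(u,x_0)v,x_2)w$. Write $Y(x)(u\otimes v)=Y(u,x)v$. A module over a nonlocal vertex algebra $H$ is a vector space $W$ with $Y_W(\cdot,x):H\to\mathrm{Hom}(W,W((x)))$, $Y_W(\mathbf 1,x)=1_W$, and for $a,b\in H$, $w\in W$ some $l\ge0$ with $(x_0+x_2)^lY_W(a,x_0+x_2)Y_W(b,x_2)w=(x_0+x_2)^lY_W(Y(a,x_0)b,x_2)w$.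 Conventions: $f(x_1\pm x_2)$ for $f\in\mathbb C((x))$ is expanded in nonnegative powers of the second variable; $T^{ij}$ denotes $T$ acting on tensor factors $i,j$; maps are extended linearly over scalar series. A nonlocal vertex bialgebra is a nonlocal vertex algebra $H$ with a coalgebra structure $(\Delta,\varepsilon)$ such that $\varepsilon(\mathbf 1)=1$, $\varepsilon(Y(h,x)h')=\varepsilon(h)\varepsilon(h')$, $\Delta(\mathbf 1)=\mathbf 1\otimes\mathbf 1$, $\Delta(Y(h,x)h')=Y(\Delta(h),x)\Delta(h')$ (tensor product structure on $H\otimes H$). Write $\Delta(h)=\sum h^{(1)}\otimes h^{(2)}$. A nonlocal vertex $H$-module-algebra is a nonlocal vertex algebra $U$ with an $H$-module structure (vertex operators $Y(h,x)$) such that for $h\in H$, $u,u'\in U$: $Y(h,x)u\in U\otimes\mathbb C((x))$ (a finite sum), $Y(h,x)\mathbf 1=\varepsilon(h)\mathbf 1$, and $Y(h,x)Y(u,z)u'=\sum Y(Y(h^{(1)},x-z)u,z)Y(h^{(2)},x)u'$. A nonlocal vertex $H$-comodule-algebra is a nonlocal vertex algebra $V$ with $\rho:V\to H\otimes V$ making $V$ a left $H$-comodule ($(1\otimes\rho)\rho=(\Delta\otimes1)\rho$, $(\varepsilon\otimes1)\rho(v)=1\otimes v$) such that $\rho(\mathbf 1)=\mathbf 1\otimes\mathbf 1$ and $\rho(Y(v,x)v')=\sum_{i,j}Y(h_i,x)h'_j\otimes Y(v_i,x)v'_j$ whenever $\rho(v)=\sum_i h_i\otimes v_i$, $\rho(v')=\sum_j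 h'_j\otimes v'_j$. Smash product $U\sharp V$: the nonlocal vertex algebra on $U\otimes V$ with vacuum $\mathbf 1\otimes\mathbf 1$ and $Y_\sharp(u\otimes v,x)(u'\otimes v')=\sum_i Y(u,x)Y(h_i,x)u'\otimes Y(v_i,x)v'$ where $\rho(v)=\sum_ih_i\otimes v_i$. Twisting operator for $(U,V)$: a linear map $R(x):V\otimes U\to U\otimes V\otimes\mathbb C((x))$ such that $R(x)(v\otimes\mathbf 1)=\mathbf 1\otimes v$, $R(x)(\mathbf 1\otimes u)=u\otimes\mathbf 1$, $R(x_1)(1\otimes Y(x_2))=(Y(x_2)\otimes1)R^{23}(x_1)R^{12}(x_1+x_2)$ on $V\otimes U\otimes U$, and $R(x_1)(Y(x_2)\otimes 1)=(1\otimes Y(x_2))R^{12}(x_1-x_2)R^{23}(x_1)$ on $V\otimes V\otimes U$. Twisted tensor product $U\otimes_RV$: the space $U\otimes V$ with vacuum $\mathbf 1\otimes\mathbf 1$ and $Y_R(u\otimes v,x)(u'\otimes v')=\sum_j f_j(-x)Y(u,x)u'_j\otimes Y(v_j,x)v'$ where $R(x)(v\otimes u')=\sum_j u'_j\otimes v_j\otimes f_j(x)$. *)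

From HB Require Import structures.
From mathcomp Require Import all_boot all_algebra.
From mathcomp Require Import complex Rstruct.
From mathcomp Require Import classical_sets fsbigop.
Set Implicit Arguments. Unset Strict Implicit. Unset Printing Implicit Defensive.
Import GRing.Theory.
Local Open Scope ring_scope.

Definition C : fieldType := Rdefinitions.R[i].

Section NonlocalVertex.
Variable K : fieldType.

Definition lin {A B : lmodType K} (f : A -> B) :=
  forall (c : K) (x y : A), f (c *: x + y) = c *: f x + f y.
Definition bilin {A B Z : lmodType K} (f : A -> B -> Z) :=
  (forall b, lin (fun a => f a b)) /\ (forall a, lin (f a)).
Definition trilin {A B D Z : lmodType K} (f : A -> B -> D -> Z) :=
  (forall b d, lin (fun a => f a b d)) /\ (forall a d, lin (fun b => f a b d))
  /\ (forall a b, lin (f a b)).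

(** Elements of algebraic tensor products A (x) B (resp. A (x) B (x) D) are
    represented by finite lists of pure tensors; two lists denote the same
    tensor iff they agree under every bilinear (trilinear) map into every
    vector space (universal property of the tensor product). *)
Definition tensor2_eq {A B : lmodType K} (s t : seq (A * B)) :=
  forall (Z : lmodType K) (f : A -> B -> Z), bilin f ->
    \sum_(p <- s) f p.1 p.2 = \sum_(p <- t) f p.1 p.2.
Definition tensor3_eq {A B D : lmodType K} (s t : seq (A * B * D)) :=
  forall (Z : lmodType K) (f : A -> B -> D -> Z), trilin f ->
    \sum_(p <- s) f p.1.1 p.1.2 p.2 = \sum_(p <- t) f p.1.1 p.1.2 p.2.

(** * Formal series
    A formal series in x with coefficients in A is its coefficient function
    [int -> A]  (k |-> coefficient of x^k).  It lies in A((x)) iff it is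
    truncated from below. Two-variable series are [int -> int -> A]
    (i, l |-> coefficient of x_1^i x_2^l).  Sums over infinitely many indices
    are the fsbigop sums over finitely supported families (all the sums used
    below are finitely supported under the hypotheses). *)
Definition trunc {A : zmodType} (f : int -> A) :=
  exists N : int, forall k : int, k < N -> f k = 0.

Definition binz (a : int) (j : nat) : K :=
  (\prod_(t < j) (a - (t : nat)%:Z)%:~R) / (j`!)%:R.

(** Vertex operators are encoded by coefficient maps:
    [Y a b k] = coefficient of x^k in Y(a,x)b. *)

(** coefficient of x0^i x2^l in  Y_W(a, x0 + x2) Y_W(b, x2) w
    (x0 + x2 expanded in nonnegative powers of x2) *)
Definition assoc_lhs {A W : lmodType K} (YW : A -> W -> int -> W)
    (a b : A) (w : W) (i l : int) : W :=
  \sum_(j \in [set: nat]) binz (i + j%:Z) j *: YW a (YW b w (l - j%:Z)) (i + j%:Z).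

Definition assoc_rhs {A W : lmodType K} (YA : A -> A -> int -> A)
    (YW : A -> W -> int -> W) (a b : A) (w : W) (i l : int) : W :=
  YW (YA a b i) w l.

(** coefficients of (x0 + x2)^k F(x0, x2) *)
Definition mul_x0x2_pow {W : lmodType K} (k : nat) (F : int -> int -> W)
    (i l : int) : W :=
  \sum_(j < k.+1) ('C(k, j))%:R *: F (i - (k - j)%:Z) (l - (j : nat)%:Z).

Definition weak_assoc {A W : lmodType K} (YA : A -> A -> int -> A)
    (YW : A -> W -> int -> W) :=
  forall (a b : A) (w : W), exists k : nat, forall i l : int,
    mul_x0x2_pow k (assoc_lhs YW a b w) i l
    = mul_x0x2_pow k (assoc_rhs YA YW a b w) i l.

Definition nva {A : lmodType K} (vac : A) (Y : A -> A -> int -> A) :=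
  [/\ (forall k, bilin (fun a b => Y a b k)),
      (forall a b, trunc (Y a b)),
      (forall v k, Y vac v k = if k == 0 then v else 0),
      (forall v k, k < 0 -> Y v vac k = 0) /\ (forall v, Y v vac 0 = v)
    & weak_assoc Y Y].

Definition nva_module {A W : lmodType K} (vacA : A) (YA : A -> A -> int -> A)
    (YW : A -> W -> int -> W) :=
  [/\ (forall k, bilin (fun a w => YW a w k)),
      (forall a w, trunc (YW a w)),
      (forall w k, YW vacA w k = if k == 0 then w else 0)
    & weak_assoc YA YW].

(** tensor product vertex operator on A (x) B, tested against a bilinear f:
    coefficient of x^k of  f(Y(a,x)c, Y(b,x)d)  *)
Definition tprodY {A B Z : lmodType K} (YA : A -> A -> int -> A)
    (YB : B -> B -> int -> B) (f : A -> B -> Z) (a : A) (b : B) (c : A) (d : B)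
    (k : int) : Z :=
  \sum_(m \in [set: int]) f (YA a c m) (YB b d (k - m)).

Definition coalgebra {H : lmodType K} (Delta : H -> seq (H * H)) (eps : H -> K) :=
  [/\ (forall (c : K) h h', eps (c *: h + h') = c * eps h + eps h'),
      (forall (c : K) h h', tensor2_eq (Delta (c *: h + h'))
                     ([seq (c *: p.1, p.2) | p <- Delta h] ++ Delta h')),
      (forall h, tensor3_eq [seq (q.1, q.2, p.2) | p <- Delta h, q <- Delta p.1]
                            [seq (p.1, q.1, q.2) | p <- Delta h, q <- Delta p.2]),
      (forall h, \sum_(p <- Delta h) eps p.1 *: p.2 = h)
    & (forall h, \sum_(p <- Delta h) eps p.2 *: p.1 = h)].

Definition nv_bialgebra {H : lmodType K} (vac : H) (Y : H -> H -> int -> H)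
    (Delta : H -> seq (H * H)) (eps : H -> K) :=
  nva vac Y /\ coalgebra Delta eps /\ eps vac = 1 /\
  (forall h h' k, eps (Y h h' k) = if k == 0 then eps h * eps h' else 0) /\
  tensor2_eq (Delta vac) [:: (vac, vac)] /\
  (forall h h' (k : int) (Z : lmodType K) (f : H -> H -> Z), bilin f ->
     \sum_(p <- Delta (Y h h' k)) f p.1 p.2
     = \sum_(p <- Delta h) \sum_(q <- Delta h') tprodY Y Y f p.1 p.2 q.1 q.2 k).

Definition comodule {H V : lmodType K} (Delta : H -> seq (H * H)) (eps : H -> K)
    (rho : V -> seq (H * V)) :=
  (forall (c : K) v v', tensor2_eq (rho (c *: v + v'))
                     ([seq (c *: p.1, p.2) | p <- rho v] ++ rho v')) /\
  (forall v, tensor3_eq [seq (p.1, q.1, q.2) | p <- rho v, q <- rho p.2]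
                        [seq (q.1, q.2, p.2) | p <- rho v, q <- Delta p.1]) /\
  (forall v, \sum_(p <- rho v) eps p.1 *: p.2 = v).

Definition comodule_algebra {H V : lmodType K} (vacH : H) (YH : H -> H -> int -> H)
    (Delta : H -> seq (H * H)) (eps : H -> K)
    (vacV : V) (YV : V -> V -> int -> V) (rho : V -> seq (H * V)) :=
  nva vacV YV /\ comodule Delta eps rho /\
  tensor2_eq (rho vacV) [:: (vacH, vacV)] /\
  (forall v v' (k : int) (Z : lmodType K) (f : H -> V -> Z), bilin f ->
     \sum_(p <- rho (YV v v' k)) f p.1 p.2
     = \sum_(p <- rho v) \sum_(q <- rho v') tprodY YH YV f p.1 p.2 q.1 q.2 k).

(** coefficient of x^a z^c in  Y(Y(h1, x - z) u, z) Y(h2, x) u'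
    (x - z expanded in nonnegative powers of z) *)
Definition modalg_rhs {H U : lmodType K} (YU : U -> U -> int -> U)
    (YHU : H -> U -> int -> U) (h1 h2 : H) (u u' : U) (a c : int) : U :=
  \sum_(l \in [set: nat]) \sum_(a1 \in [set: int])
     ((-1) ^+ l * binz (a1 + l%:Z) l)
       *: YU (YHU h1 u (a1 + l%:Z)) (YHU h2 u' (a - a1)) (c - l%:Z).

Definition module_algebra {H U : lmodType K} (vacH : H) (YH : H -> H -> int -> H)
    (Delta : H -> seq (H * H)) (eps : H -> K)
    (vacU : U) (YU : U -> U -> int -> U) (YHU : H -> U -> int -> U) :=
  nva vacU YU /\ nva_module vacH YH YHU /\
  (forall h u, exists s : seq (U * (int -> K)),
     (forall t, List.In t s -> trunc t.2) /\
     (forall k, YHU h u k = \sum_(t <- s) t.2 k *: t.1)) /\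
  (forall h k, YHU h vacU k = if k == 0 then eps h *: vacU else 0) /\
  (forall h u u' (a c : int),
     YHU h (YU u u' c) a = \sum_(p <- Delta h) modalg_rhs YU YHU p.1 p.2 u u' a c).

(** * Twisting operators
    R(x) : V (x) U -> U (x) V (x) C((x)) is represented by a map giving, for
    v and u, a finite list of triples (u_j, v_j, f_j) with R(x)(v (x) u) =
    sum_j u_j (x) v_j (x) f_j(x).  Elements of U (x) V (x) C((x...)) are compared
    coefficientwise in U (x) V, tested against bilinear maps g on U x V. *)
Definition Rtest {U V Z : lmodType K} (R : V -> U -> seq (U * V * (int -> K)))
    (g : U -> V -> Z) (v : V) (u : U) (k : int) : Z :=
  \sum_(t <- R v u) t.2 k *: g t.1.1 t.1.2.

(** coefficient x1^i x2^l of  (Y(x2) (x) 1) R^{23}(x1) R^{12}(x1 + x2) (v (x) u (x) u') *)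
Definition twist3_rhs {U V Z : lmodType K} (YU : U -> U -> int -> U)
    (R : V -> U -> seq (U * V * (int -> K))) (g : U -> V -> Z)
    (v : V) (u u' : U) (i l : int) : Z :=
  \sum_(t <- R v u) \sum_(s <- R t.1.2 u') \sum_(j \in [set: nat])
    \sum_(n \in [set: int])
      (binz (n + j%:Z) j * t.2 (n + j%:Z) * s.2 (i - n))
        *: g (YU t.1.1 s.1.1 (l - j%:Z)) s.1.2.

(** coefficient x1^i x2^l of  (1 (x) Y(x2)) R^{12}(x1 - x2) R^{23}(x1) (v (x) v' (x) u) *)
Definition twist4_rhs {U V Z : lmodType K} (YV : V -> V -> int -> V)
    (R : V -> U -> seq (U * V * (int -> K))) (g : U -> V -> Z)
    (v v' : V) (u : U) (i l : int) : Z :=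
  \sum_(t <- R v' u) \sum_(s <- R v t.1.1) \sum_(j \in [set: nat])
    \sum_(n \in [set: int])
      ((-1) ^+ j * binz (n + j%:Z) j * s.2 (n + j%:Z) * t.2 (i - n))
        *: g s.1.1 (YV s.1.2 t.1.2 (l - j%:Z)).

Definition twisting_operator {U V : lmodType K} (vacU : U) (YU : U -> U -> int -> U)
    (vacV : V) (YV : V -> V -> int -> V)
    (R : V -> U -> seq (U * V * (int -> K))) :=
  (forall v u t, List.In t (R v u) -> trunc t.2) /\
  (forall (Z : lmodType K) (g : U -> V -> Z), bilin g ->
     forall k, bilin (fun v u => Rtest R g v u k)) /\
  (forall (Z : lmodType K) (g : U -> V -> Z), bilin g -> forall v k,
     Rtest R g v vacU k = if k == 0 then g vacU v else 0) /\
  (forall (Z : lmodType K) (g : U -> V -> Z), bilin g -> forall u k,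
     Rtest R g vacV u k = if k == 0 then g u vacV else 0) /\
  (forall (Z : lmodType K) (g : U -> V -> Z), bilin g -> forall v u u' (i l : int),
     Rtest R g v (YU u u' l) i = twist3_rhs YU R g v u u' i l) /\
  (forall (Z : lmodType K) (g : U -> V -> Z), bilin g -> forall v v' u (i l : int),
     Rtest R g (YV v v' l) u i = twist4_rhs YV R g v v' u i l).

(** coefficient of x^k of the smash product vertex operator
    Y#(u (x) v, x)(u' (x) v') = sum_i Y(u,x)Y(h_i,x)u' (x) Y(v_i,x)v', tested by g *)
Definition smashY {H U V Z : lmodType K} (YU : U -> U -> int -> U)
    (YV : V -> V -> int -> V) (YHU : H -> U -> int -> U) (rho : V -> seq (H * V))
    (g : U -> V -> Z) (u : U) (v : V) (u' : U) (v' : V) (k : int) : Z :=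
  \sum_(p <- rho v) \sum_(m \in [set: int])
    g (\sum_(n \in [set: int]) YU u (YHU p.1 u' n) (m - n)) (YV p.2 v' (k - m)).

(** coefficient of x^k of the twisted tensor product vertex operator
    Y_R(u (x) v, x)(u' (x) v') = sum_j f_j(-x) Y(u,x)u'_j (x) Y(v_j,x)v',
    where R(x)(v (x) u') = sum_j u'_j (x) v_j (x) f_j(x), tested by g *)
Definition twistedY {U V Z : lmodType K} (YU : U -> U -> int -> U)
    (YV : V -> V -> int -> V) (R : V -> U -> seq (U * V * (int -> K)))
    (g : U -> V -> Z) (u : U) (v : V) (u' : U) (v' : V) (k : int) : Z :=
  \sum_(t <- R v u') \sum_(n \in [set: int]) \sum_(m \in [set: int])
    ((-1) ^ n * t.2 n) *: g (YU u t.1.1 m) (YV t.1.2 v' (k - n - m)).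

Definition is_R_of_coaction {H U V : lmodType K} (YHU : H -> U -> int -> U)
    (rho : V -> seq (H * V)) (R : V -> U -> seq (U * V * (int -> K))) :=
  (forall v u t, List.In t (R v u) -> trunc t.2) /\
  (forall (Z : lmodType K) (g : U -> V -> Z), bilin g -> forall v u (k : int),
     Rtest R g v u k = \sum_(p <- rho v) ((-1) ^ k) *: g (YHU p.1 u k) p.2).

End NonlocalVertex.

From HB Require Import structures.
From mathcomp Require Import all_boot all_algebra.
From mathcomp Require Import complex Rstruct.
From mathcomp Require Import classical_sets fsbigop.
From mathcomp Require Import all_order finmap zify ring.
Set Implicit Arguments. Unset Strict Implicit. Unset Printing Implicit Defensive.
Import Order.TTheory GRing.Theory Num.Theory.
Local Open Scope ring_scope.

(** Write rho(v) = sum_i h_i (x) v_i.  The vacuum and linearity conditions on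
    R(x) come from the counit, vacuum and linearity of rho and of the H-action.
    The compatibility of R with Y on U follows by expanding Y(h_i,-x1)Y(u,x2)u'
    with the module-algebra axiom and regrouping the coproduct through the
    coassociativity of rho; the compatibility with Y on V follows from the
    multiplicativity of rho and the associativity
    Y(Y(a,x0)b,x2) = Y(a,x2+x0)Y(b,x2) of the H-action, which weak
    associativity upgrades to an identity of coefficients because all series
    involved are truncated.  Finally, once R is unfolded, Y_R is Y# because the
    sign (-1)^n of f_j(-x) cancels the sign (-1)^n of Y(h_i,-x). *)

Section Linear.
Variable K : fieldType.
Implicit Types A B D : lmodType K.

Lemma lin0 A B (f : A -> B) : lin f -> f 0 = 0.
Proof.
move=> Hf; have := Hf 1 0 0; rewrite !scale1r addr0 => E.
by apply: (addrI (f 0)); rewrite addr0 -E.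
Qed.

Lemma linD A B (f : A -> B) : lin f -> forall x y, f (x + y) = f x + f y.
Proof. by move=> Hf x y; rewrite -[x]scale1r Hf !scale1r. Qed.

Lemma linZ A B (f : A -> B) : lin f -> forall c x, f (c *: x) = c *: f x.
Proof. by move=> Hf c x; rewrite -[c *: x]addr0 Hf (lin0 Hf) addr0. Qed.

Lemma lin_sum A B (f : A -> B) (I : Type) (s : seq I) (F : I -> A) :
  lin f -> f (\sum_(i <- s) F i) = \sum_(i <- s) f (F i).
Proof. by move=> Hf; apply: (big_morph f (linD Hf) (lin0 Hf)). Qed.

Lemma eq_lin A B (f h : A -> B) : f =1 h -> lin h -> lin f.
Proof. by move=> E Hh c x y; rewrite !E. Qed.

Lemma lin_comp A B D (f : A -> B) (h : B -> D) :
  lin f -> lin h -> lin (fun x => h (f x)).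
Proof. by move=> Hf Hh c x y; rewrite Hf Hh. Qed.

Lemma linZl A B (f : A -> B) (c : K) : lin f -> lin (fun x => c *: f x).
Proof. by move=> Hf a x y; rewrite Hf scalerDr !scalerA mulrC. Qed.

Lemma lin_sumr A B (I : Type) (s : seq I) (F : I -> A -> B) :
  (forall i, lin (F i)) -> lin (fun x => \sum_(i <- s) F i x).
Proof.
by move=> HF c x y; rewrite scaler_sumr -big_split; apply: eq_bigr => i _; apply: HF.
Qed.

End Linear.

Section FinitelySupportedSums.
Variable W : zmodType.

Definition fsupp {T : choiceType} (F : T -> W) :=
  exists A : {fset T}, forall i, i \notin A -> F i = 0.

Lemma fsupp0 (T : choiceType) : fsupp (fun _ : T => 0).
Proof. by exists fset0. Qed.

Lemma fsuppD (T : choiceType) (F G : T -> W) :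
  fsupp F -> fsupp G -> fsupp (fun i => F i + G i).
Proof.
move=> [A HA] [B HB]; exists (A `|` B)%fset => i.
by rewrite inE negb_or => /andP[/HA -> /HB ->]; rewrite addr0.
Qed.

Lemma fsuppW (T : choiceType) (F G : T -> W) :
  (forall i, F i = 0 -> G i = 0) -> fsupp F -> fsupp G.
Proof. by move=> E [A HA]; exists A => i /HA /E. Qed.

Lemma eq_fsupp (T : choiceType) (F G : T -> W) : F =1 G -> fsupp F -> fsupp G.
Proof. by move=> E; apply: fsuppW => i; rewrite E. Qed.

Lemma fsumD (T : choiceType) (F G : T -> W) : fsupp F -> fsupp G ->
  \sum_(i \in [set: T]) (F i + G i)
  = \sum_(i \in [set: T]) F i + \sum_(i \in [set: T]) G i.
Proof.
move=> [A HA] [B HB].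
have HAB i : i \notin (A `|` B)%fset -> F i = 0 /\ G i = 0.
  by rewrite inE negb_or => /andP[/HA -> /HB ->].
rewrite (fsbigTE (A `|` B)%fset); last by move=> i /HAB [-> ->]; rewrite addr0.
rewrite (fsbigTE (A `|` B)%fset F); last by move=> i /HAB [].
by rewrite (fsbigTE (A `|` B)%fset G) ?big_split // => i /HAB [].
Qed.

Lemma fsupp_sum_seq (T : choiceType) (X : Type) (s : seq X) (F : X -> T -> W) :
  (forall x, List.In x s -> fsupp (F x)) -> fsupp (fun i => \sum_(x <- s) F x i).
Proof.
elim: s => [|x s IH] HF.
  by apply: (eq_fsupp _ (fsupp0 T)) => i; rewrite big_nil.
apply: (eq_fsupp (F := fun i => F x i + \sum_(x <- s) F x i)).
  by move=> i; rewrite big_cons.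
by apply: fsuppD; [apply: HF; left | apply: IH => y Hy; apply: HF; right].
Qed.

Lemma exchange_fsum_seq (T : choiceType) (X : Type) (s : seq X) (F : X -> T -> W) :
  (forall x, List.In x s -> fsupp (F x)) ->
  \sum_(i \in [set: T]) \sum_(x <- s) F x i = \sum_(x <- s) \sum_(i \in [set: T]) F x i.
Proof.
elim: s => [|x s IH] HF.
  by rewrite big_nil; under eq_fsbigr do rewrite big_nil; rewrite fsbig1.
have HFs y : List.In y s -> fsupp (F y) by move=> Hy; apply: HF; right.
rewrite big_cons -IH // -fsumD; last exact: fsupp_sum_seq.
  by under eq_fsbigr do rewrite big_cons.
by apply: HF; left.
Qed.

Lemma eq_big_In (X : Type) (s : seq X) (F1 F2 : X -> W) :
  (forall x, List.In x s -> F1 x = F2 x) ->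
  \sum_(x <- s) F1 x = \sum_(x <- s) F2 x.
Proof.
elim: s => [|x s IH] E; first by rewrite !big_nil.
by rewrite !big_cons E ?IH //; [move=> y Hy; apply: E; right | left].
Qed.

Lemma exchange_fsum2_seq (I J : choiceType) (X : Type) (s : seq X)
    (F : X -> I -> J -> W) :
  (forall x, List.In x s -> forall i, fsupp (F x i)) ->
  (forall x, List.In x s -> fsupp (fun i => \sum_(j \in [set: J]) F x i j)) ->
  \sum_(x <- s) \sum_(i \in [set: I]) \sum_(j \in [set: J]) F x i j =
  \sum_(i \in [set: I]) \sum_(j \in [set: J]) \sum_(x <- s) F x i j.
Proof.
move=> H1 H2; rewrite -exchange_fsum_seq //.
by apply: eq_fsbigr => i _; rewrite exchange_fsum_seq // => x Hx; apply: H1.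
Qed.

Lemma exchange_fsum2_seq2 (I J : choiceType) (X Y : Type) (s : seq X)
    (t : X -> seq Y) (F : X -> Y -> I -> J -> W) :
  (forall x y, List.In x s -> List.In y (t x) ->
     (forall i, fsupp (F x y i)) /\ fsupp (fun i => \sum_(j \in [set: J]) F x y i j)) ->
  \sum_(x <- s) \sum_(y <- t x) \sum_(i \in [set: I]) \sum_(j \in [set: J]) F x y i j =
  \sum_(i \in [set: I]) \sum_(j \in [set: J]) \sum_(x <- s) \sum_(y <- t x) F x y i j.
Proof.
move=> HF.
have inner x : List.In x s ->
    \sum_(y <- t x) \sum_(i \in [set: I]) \sum_(j \in [set: J]) F x y i j =
    \sum_(i \in [set: I]) \sum_(j \in [set: J]) \sum_(y <- t x) F x y i j.
  move=> Hx; apply: exchange_fsum2_seq => y Hy; [exact: (HF x y Hx Hy).1|exact: (HF x y Hx Hy).2].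
rewrite (eq_big_In inner) exchange_fsum2_seq //.
- by move=> x Hx i; apply: fsupp_sum_seq => y Hy; apply: (HF x y Hx Hy).1.
move=> x Hx; apply: (eq_fsupp (F := fun i => \sum_(y <- t x) \sum_(j \in [set: J]) F x y i j)).
  by move=> i; rewrite exchange_fsum_seq // => y Hy; apply: (HF x y Hx Hy).1.
by apply: fsupp_sum_seq => y Hy; apply: (HF x y Hx Hy).2.
Qed.

End FinitelySupportedSums.

Lemma fsum_morph (W W' : zmodType) (T : choiceType) (f : W -> W') (F : T -> W) :
  f 0 = 0 -> (forall x y, f (x + y) = f x + f y) -> fsupp F ->
  f (\sum_(i \in [set: T]) F i) = \sum_(i \in [set: T]) f (F i).
Proof.
move=> f0 fD [A HA]; rewrite (fsbigTE A) // (fsbigTE A); last by move=> i /HA ->.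
exact: (big_morph f fD f0).
Qed.

Lemma lin_fsum (K : fieldType) (A B : lmodType K) (T : choiceType) (F : T -> A -> B) :
  (forall i, lin (F i)) -> (forall x, fsupp (fun i => F i x)) ->
  lin (fun x => \sum_(i \in [set: T]) F i x).
Proof.
move=> HF Hs c x y.
rewrite (fsum_morph (f := fun z : B => c *: z)) ?scaler0 //; last first.
  by move=> *; rewrite scalerDr.
rewrite -fsumD //; last by apply: (fsuppW _ (Hs x)) => i ->; rewrite scaler0.
by apply: eq_fsbigr => i _; rewrite HF.
Qed.

Section IntegerIndexedSums.
Variable W : zmodType.

Definition int_window (lo hi : int) : {fset int} :=
  seq_fset tt [seq lo + i%:Z | i <- iota 0 `|hi - lo + 1|].

Lemma mem_int_window lo hi n : lo <= n <= hi -> n \in int_window lo hi.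
Proof.
move=> /andP[H1 H2]; rewrite seq_fsetE; apply/mapP; exists `|n - lo|%N.
  by rewrite mem_iota /= add0n; lia.
lia.
Qed.

Lemma fsupp_int (F : int -> W) (lo hi : int) :
  (forall n, n < lo -> F n = 0) -> (forall n, hi < n -> F n = 0) -> fsupp F.
Proof.
move=> Hlo Hhi; exists (int_window lo hi) => n Hn.
case: (ltrP n lo) => [/Hlo //| H1]; case: (ltrP hi n) => [/Hhi //| H2].
by move/negP: Hn; case; apply: mem_int_window; lia.
Qed.

Lemma fsupp_nat (F : nat -> W) (hi : int) :
  (forall j : nat, hi < j%:Z -> F j = 0) -> fsupp F.
Proof.
move=> Hhi; exists (seq_fset tt (iota 0 `|hi|.+1)) => n.
rewrite seq_fsetE mem_iota /= add0n => Hn; apply: Hhi.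
by move: Hn; rewrite ltnS -ltnNge; lia.
Qed.

Lemma fsum_shift (F : int -> W) (c : int) :
  \sum_(n \in [set: int]) F n = \sum_(n \in [set: int]) F (n + c).
Proof.
apply: (reindex_fsbigT (fun n => n + c)).
by exists (fun n => n - c) => n; rewrite ?addrK ?subrK.
Qed.

Lemma fsum_int_nat (F : int -> W) : (forall m, m < 0 -> F m = 0) ->
  \sum_(m \in [set: int]) F m = \sum_(j \in [set: nat]) F j%:Z.
Proof.
move=> HF; rewrite -(fsbig_image [set: nat] (fun j : nat => j%:Z)); last first.
  by move=> x y _ _ [].
apply/esym/fsbig_widen => // m [_ Hm]; rewrite /preimage /=.
apply: HF; case: (ltrP m 0) => // Hm0; exfalso; apply: Hm.
by exists `|m|%N => //; lia.
Qed.

Lemma exchange_fsum_int (F : int -> int -> W) lo1 hi1 lo2 hi2 :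
  (forall i j, F i j != 0 -> (lo1 <= i <= hi1) && (lo2 <= j <= hi2)) ->
  \sum_(i \in [set: int]) \sum_(j \in [set: int]) F i j =
  \sum_(j \in [set: int]) \sum_(i \in [set: int]) F i j.
Proof.
move=> HF; pose A := int_window lo1 hi1; pose B := int_window lo2 hi2.
have F0 i j : (i \notin A) || (j \notin B) -> F i j = 0.
  case/orP => Hn; apply/eqP; apply: contraNT Hn => /HF/andP[h1 h2].
    by rewrite ?negbK mem_int_window.
  by rewrite ?negbK mem_int_window.
have E1 i : \sum_(j \in [set: int]) F i j = \sum_(j <- B) F i j.
  by apply: fsbigTE => j jB; apply: F0; rewrite jB orbT.
have E2 j : \sum_(i \in [set: int]) F i j = \sum_(i <- A) F i j.
  by apply: fsbigTE => i iA; apply: F0; rewrite iA.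
under eq_fsbigr do rewrite E1.
under [RHS]eq_fsbigr do rewrite E2.
rewrite (fsbigTE A); last by move=> i iA; apply: big1 => j _; apply: F0; rewrite iA.
rewrite (fsbigTE B); last by move=> j jB; apply: big1 => i _; apply: F0; rewrite jB orbT.
exact: exchange_big.
Qed.

End IntegerIndexedSums.

Lemma trunc_lincomb (K : fieldType) (X W : lmodType K) (phi : X -> int -> W)
    (s : seq (X * (int -> K))) :
  (forall m, lin (fun x => phi x m)) -> (forall x, trunc (phi x)) ->
  exists N, forall (c : int) m, m < N -> phi (\sum_(t <- s) t.2 c *: t.1) m = 0.
Proof.
move=> Hl Ht; elim: s => [|t s [N IH]].
  by exists 0 => c m _; rewrite big_nil (lin0 (Hl m)).
have [Nt HNt] := Ht t.1.
exists (Num.min Nt N) => c m; rewrite lt_min => /andP[h1 h2].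
by rewrite big_cons (linD (Hl m)) (linZ (Hl m)) HNt // IH // scaler0 addr0.
Qed.

Lemma trunc_lincomb2 (K : fieldType) (X Y W : lmodType K) (phi : X -> Y -> int -> W)
    (s1 : seq (X * (int -> K))) (s2 : seq (Y * (int -> K))) :
  (forall m, bilin (fun x y => phi x y m)) -> (forall x y, trunc (phi x y)) ->
  exists N, forall (c1 c2 : int) m, m < N ->
    phi (\sum_(t <- s1) t.2 c1 *: t.1) (\sum_(t <- s2) t.2 c2 *: t.1) m = 0.
Proof.
move=> Hl Ht; elim: s1 => [|t s [N IH]].
  by exists 0 => c1 c2 m _; rewrite big_nil (lin0 ((Hl m).1 _)).
have [Nt HNt] := trunc_lincomb s2 (phi := phi t.1) (fun m => (Hl m).2 t.1) (Ht t.1).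
exists (Num.min Nt N) => c1 c2 m; rewrite lt_min => /andP[h1 h2].
by rewrite big_cons (linD ((Hl m).1 _)) (linZ ((Hl m).1 _)) HNt // IH // scaler0 addr0.
Qed.

Lemma natr_fact_neq0 (n : nat) : ((n`!)%:R : C) != 0.
Proof. by rewrite /C /= pnatr_eq0 -lt0n fact_gt0. Qed.

Lemma binz0 (c : int) : binz C c 0 = 1.
Proof. by rewrite /binz big_ord0 fact0 divr1. Qed.

Lemma binzS (c : int) (j : nat) :
  binz C (c + 1) j.+1 = binz C c j.+1 + binz C c j.
Proof.
rewrite /binz big_ord_recl big_ord_recr /=.
rewrite (eq_bigr (fun t : 'I_j => ((c - (t : nat)%:Z)%:~R : C))); last first.
  by move=> i _; rewrite /bump /=; congr (_%:~R); lia.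
rewrite factS natrM.
have h1 := natr_fact_neq0 j.
have h2 : (j.+1%:R : C) != 0 by rewrite /C /= pnatr_eq0.
rewrite !rmorphB !rmorphD /=.
field.
by rewrite h1 /= addrC natr1 h2.
Qed.

Lemma binz_nat (n j : nat) : binz C n%:Z j = 'C(n, j)%:R.
Proof.
elim: n j => [|n IH] [|j]; rewrite ?binz0 ?bin0 //.
  by rewrite /binz big_ord_recl /= subr0 mul0r mul0r bin0n.
have -> : (n.+1)%:Z = n%:Z + 1 by lia.
by rewrite binzS !IH binS natrD.
Qed.

(* Zero for a negative lower index: with this convention Pascal's rule and the
   symmetry c choose s = c choose (c - s) (for c >= 0) hold for every s. *)
Definition binomz (c s : int) : C :=
  match s with Posz j => binz C c j | Negz _ => 0 end.

Lemma binomz_neg (c s : int) : s < 0 -> binomz c s = 0.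
Proof. by case: s. Qed.

Lemma binomz_nat (c s : int) : 0 <= c -> 0 <= s -> binomz c s = 'C(`|c|, `|s|)%:R.
Proof. by case: c => // n _; case: s => // j _ /=; apply: binz_nat. Qed.

Lemma binomzD1 (c s : int) : binomz (c + 1) s = binomz c s + binomz c (s - 1).
Proof.
case: s => [[|j]|k].
- by rewrite /= !binz0 addr0.
- have -> : (Posz j.+1 - 1) = Posz j by lia.
  by rewrite /= binzS.
- by rewrite !binomz_neg ?addr0 //; lia.
Qed.

Lemma binomz_sym (c s : int) : 0 <= c -> binomz c s = binomz c (c - s).
Proof.
move=> c0; case: (ltrP s 0) => s0.
  by rewrite binomz_neg // binomz_nat ?bin_small //; lia.
case: (ltrP c s) => cs.
  by rewrite [RHS]binomz_neg ?binomz_nat ?bin_small //; lia.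
rewrite !binomz_nat //; last lia.
have -> : `|c - s|%N = (`|c| - `|s|)%N by lia.
by rewrite bin_sub //; lia.
Qed.

Section BinomialTimesSeries.
Variable W : lmodType C.
Implicit Types D : int -> int -> W.

Lemma mul_x0x2_pow0 D i l : mul_x0x2_pow 0 D i l = D i l.
Proof. by rewrite /mul_x0x2_pow big_ord_recl big_ord0 /= bin0 scale1r addr0 !subr0. Qed.

Lemma mul_x0x2_powS (k : nat) D i l :
  mul_x0x2_pow k.+1 D i l = mul_x0x2_pow k D (i - 1) l + mul_x0x2_pow k D i (l - 1).
Proof.
rewrite /mul_x0x2_pow big_ord_recl.
under eq_bigr => j _ do rewrite /bump /= binS natrD scalerDl.
rewrite big_split /= addrA; congr (_ + _); last first.
  by apply: eq_bigr => j _; rewrite /bump /=; congr (_ *: D _ _); lia.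
rewrite /bump /= big_ord_recr /= (bin_small (ltnSn k)) scale0r addr0.
rewrite [in RHS]big_ord_recl /=; congr (_ + _).
  by rewrite !bin0; congr (_ *: D _ _); lia.
rewrite addr0; apply: eq_bigr => j _; rewrite /bump /=; congr (_ *: D _ _).
by have := ltn_ord j; lia.
Qed.

Lemma mul_x0x2_powB (k : nat) D1 D2 i l :
  mul_x0x2_pow k (fun a b => D1 a b - D2 a b) i l =
  mul_x0x2_pow k D1 i l - mul_x0x2_pow k D2 i l.
Proof. by rewrite /mul_x0x2_pow -sumrB; apply: eq_bigr => j _; rewrite scalerBr. Qed.

Lemma eq_mul_x0x2_pow (k : nat) D1 D2 :
  (forall i l, D1 i l = D2 i l) ->
  forall i l, mul_x0x2_pow k D1 i l = mul_x0x2_pow k D2 i l.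
Proof. by move=> E i l; apply: eq_bigr => j _; rewrite E. Qed.

Lemma eq_mul_x0x2_pow_leq (k k' : nat) D1 D2 : (k <= k')%N ->
  (forall i l, mul_x0x2_pow k D1 i l = mul_x0x2_pow k D2 i l) ->
  forall i l, mul_x0x2_pow k' D1 i l = mul_x0x2_pow k' D2 i l.
Proof.
move=> /subnK <-; elim: (k' - k)%N => [|n IH] E i l; first exact: E.
by rewrite addSn !mul_x0x2_powS !IH.
Qed.

(* (x0 + x2)^k is not a zero divisor on series truncated below in x0: the
   coefficient of x0^(N+n) x2^(l+k) of the product is D (N+n) l plus terms
   D (N+n') _ with n' < n. *)
Lemma mul_x0x2_pow_eq0 (k : nat) D (N : int) :
  (forall m l, m < N -> D m l = 0) ->
  (forall m l, mul_x0x2_pow k D m l = 0) -> forall m l, D m l = 0.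
Proof.
move=> HN HM.
suff H n l : D (N + n%:Z) l = 0.
  move=> m l; case: (ltrP m N) => [/HN //| mN].
  by have -> : m = N + `|m - N|%N by lia.
elim/ltn_ind: n l => n IH l.
have := HM (N + n%:Z) (l + k%:Z).
rewrite /mul_x0x2_pow big_ord_recr /= subnn subr0.
have -> : l + k%:Z - k%:Z = l by lia.
rewrite binn scale1r big1 ?add0r // => j _.
set m := (N + n%:Z - (k - j)%:Z).
case: (ltrP m N) => [/HN -> | mN]; first by rewrite scaler0.
have -> : m = N + `|m - N|%N by lia.
by rewrite IH ?scaler0 //; have := ltn_ord j; rewrite /m; lia.
Qed.

End BinomialTimesSeries.

Section ModuleAssociativity.
Variables (H U : lmodType C) (YH : H -> H -> int -> H) (YHU : H -> U -> int -> U).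
Hypothesis YHU_lin : forall k, bilin (fun a w => YHU a w k).
Hypothesis YHU_tr : forall a w, trunc (YHU a w).
Hypothesis YH_tr : forall a b, trunc (YH a b).
Hypothesis YHU_assoc : weak_assoc YH YHU.
Hypothesis YHU_span : forall h u, exists s : seq (U * (int -> C)),
  forall k, YHU h u k = \sum_(t <- s) t.2 k *: t.1.

(* Uses that Y(b,x2)u is a finite sum of vectors times series: the pole order
   of Y(a,x1)Y(b,x2)u in x1 is then bounded independently of x2. *)
Lemma YHU2_trunc_outer a b u : exists N, forall c d, c < N -> YHU a (YHU b u d) c = 0.
Proof.
have [s Hs] := YHU_span b u.
have [N HN] := trunc_lincomb s (fun m => (YHU_lin m).2 a) (YHU_tr a).
by exists N => c d cN; rewrite Hs HN.
Qed.

Lemma YHU2_trunc_inner a b u : exists N, forall c d, d < N -> YHU a (YHU b u d) c = 0.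
Proof.
have [N HN] := YHU_tr b u.
by exists N => c d dN; rewrite HN // (lin0 ((YHU_lin c).2 a)).
Qed.

Variables (a b : H) (u : U).

Let A c d := YHU a (YHU b u d) c.

(* Coefficients of x0^m x2^i of (x0 + x2)^K Y(a, x0 + x2) Y(b, x2) u and of
   (x0 + x2)^K Y(a, x2 + x0) Y(b, x2) u.  Once K exceeds the pole order of
   Y(a, .) both are expansions of the same polynomial in x0 + x2 and agree. *)
Definition expand_x0x2 K m i :=
  \sum_(s \in [set: int]) binomz (m + s) s *: A (m + s - K%:Z) (i - s).
Definition expand_x2x0 K m i :=
  \sum_(s \in [set: int]) binomz (s + m) m *: A (m + s - K%:Z) (i - s).

Lemma fsupp_expand (K : nat) m i (phi : int -> C) :
  fsupp (fun s => phi s *: A (m + s - K%:Z) (i - s)).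
Proof.
have [NA HA] := YHU2_trunc_outer a b u; have [Nb HB] := YHU2_trunc_inner a b u.
apply: (@fsupp_int _ _ (NA + K%:Z - m) (i - Nb)) => s Hs.
  by rewrite /A HA ?scaler0 //; lia.
by rewrite /A HB ?scaler0 //; lia.
Qed.

Lemma fsum_expand_step (K : nat) m i (c : int -> int -> C) :
  (forall s, c (m + s) s = c (m - 1 + s) s + c (m - 1 + s) (s - 1)) ->
  \sum_(s \in [set: int]) c (m + s) s *: A (m + s - K.+1%:Z) (i - s)
  = \sum_(s \in [set: int]) c (m - 1 + s) s *: A (m - 1 + s - K%:Z) (i - s)
  + \sum_(s \in [set: int]) c (m + s) s *: A (m + s - K%:Z) (i - 1 - s).
Proof.
move=> Hc; rewrite [X in _ = _ + X](fsum_shift _ (-1)) -fsumD; last first.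
- apply: (eq_fsupp (F := fun s => c (m - 1 + s) (s - 1) *: A (m - 1 + s - K%:Z) (i - s))).
    by move=> s; congr (c _ _ *: A _ _); lia.
  exact: fsupp_expand.
- exact: fsupp_expand.
apply: eq_fsbigr => s _.
have -> : m + (s + -1) - K%:Z = m - 1 + s - K%:Z by lia.
have -> : i - 1 - (s + -1) = i - s by lia.
have -> : m + s - K.+1%:Z = m - 1 + s - K%:Z by lia.
by rewrite -scalerDl Hc; congr ((_ + c _ _) *: _); lia.
Qed.

Lemma mul_x0x2_pow_expand_x0x2 K m i : mul_x0x2_pow K (expand_x0x2 0) m i = expand_x0x2 K m i.
Proof.
elim: K m i => [|K IH] m i; first exact: mul_x0x2_pow0.
rewrite mul_x0x2_powS !IH /expand_x0x2 fsum_expand_step // => s.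
have -> : m + s = (m - 1 + s) + 1 by lia.
exact: binomzD1.
Qed.

Lemma mul_x0x2_pow_expand_x2x0 K m i : mul_x0x2_pow K (expand_x2x0 0) m i = expand_x2x0 K m i.
Proof.
elim: K m i => [|K IH] m i; first exact: mul_x0x2_pow0.
rewrite mul_x0x2_powS !IH /expand_x2x0; symmetry.
transitivity (\sum_(s \in [set: int]) binomz (m + s) (m + s - s) *: A (m + s - K.+1%:Z) (i - s)).
  by apply: eq_fsbigr => s _; congr (binomz _ _ *: _); lia.
rewrite (@fsum_expand_step K m i (fun x s => binomz x (x - s))) => [|s].
  by congr (_ + _); apply: eq_fsbigr => s _; congr (binomz _ _ *: _); lia.
have -> : m + s = (m - 1 + s) + 1 by lia.
by rewrite binomzD1 [LHS]addrC; congr (binomz _ _ + binomz _ _); lia.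
Qed.

Lemma assoc_lhs_expand m i : assoc_lhs YHU a b u m i = expand_x0x2 0 m i.
Proof.
rewrite /expand_x0x2 fsum_int_nat; last by move=> s s0; rewrite binomz_neg // scale0r.
by apply: eq_fsbigr => j _ /=; rewrite subr0 addrC.
Qed.

Lemma expand_x0x2_x2x0 NA K : (forall c d, c < NA -> A c d = 0) -> 0 <= NA + K%:Z ->
  forall m i, expand_x0x2 K m i = expand_x2x0 K m i.
Proof.
move=> HA HK m i; apply: eq_fsbigr => s _.
case: (ltrP (m + s - K%:Z) NA) => h; first by rewrite HA // !scaler0.
by rewrite binomz_sym; [rewrite addrC; congr (binomz _ _ *: _); lia | lia].
Qed.

Theorem module_assoc (m i : int) :
  YHU (YH a b m) u i = \sum_(s \in [set: int]) binomz (s + m) m *: A (m + s) (i - s).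
Proof.
have -> : \sum_(s \in [set: int]) binomz (s + m) m *: A (m + s) (i - s) = expand_x2x0 0 m i.
  by apply: eq_fsbigr => s _; rewrite subr0.
have [k Hk] := YHU_assoc a b u.
have [NA HA] := YHU2_trunc_outer a b u.
pose K := maxn k `|NA|.
have HK : 0 <= NA + K%:Z by rewrite /K; lia.
have HkK := eq_mul_x0x2_pow_leq (leq_maxl k `|NA|) Hk.
have [NF HF] := YH_tr a b.
apply/eqP; rewrite -subr_eq0; apply/eqP; move: m i.
apply: (@mul_x0x2_pow_eq0 _ K (fun m i => YHU (YH a b m) u i - expand_x2x0 0 m i) (Num.min NF 0)).
  move=> m l; rewrite lt_min => /andP[h1 h2].
  rewrite HF // (lin0 ((YHU_lin l).1 u)) sub0r /expand_x2x0 fsbig1 ?oppr0 // => s _.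
  by rewrite binomz_neg // scale0r.
move=> m l; rewrite mul_x0x2_powB.
have -> : mul_x0x2_pow K (fun m i => YHU (YH a b m) u i) m l =
          mul_x0x2_pow K (assoc_lhs YHU a b u) m l by rewrite -HkK.
rewrite (eq_mul_x0x2_pow K assoc_lhs_expand) mul_x0x2_pow_expand_x0x2.
by rewrite mul_x0x2_pow_expand_x2x0 (expand_x0x2_x2x0 HA HK) subrr.
Qed.

End ModuleAssociativity.

Section ConvolutionSupports.
Variable W : zmodType.

Lemma fsupp_conv (F : int -> int -> W) (k Nn Nm Nr : int) :
  (forall n m, (n < Nn) || (m < Nm) || (k - n - m < Nr) -> F n m = 0) ->
  (forall n, fsupp (F n)) /\ fsupp (fun n => \sum_(m \in [set: int]) F n m).
Proof.
move=> HF; split => [n|].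
  by apply: (@fsupp_int _ _ Nm (k - n - Nr)) => m hm; apply: HF; lia.
apply: (@fsupp_int _ _ Nn (k - Nm - Nr)) => n hn.
  by rewrite fsbig1 // => m _; apply: HF; lia.
by rewrite fsbig1 // => m _; apply: HF; lia.
Qed.

Lemma fsupp_binom_conv (F : nat -> int -> W) (i l N1 N2 N3 : int) :
  (forall j n, (n + j%:Z < N1) || (i - n < N2) || (l - j%:Z < N3) -> F j n = 0) ->
  (forall j, fsupp (F j)) /\ fsupp (fun j => \sum_(n \in [set: int]) F j n).
Proof.
move=> HF; split => [j|].
  by apply: (@fsupp_int _ _ (N1 - j%:Z) (i - N2)) => n hn; apply: HF; lia.
apply: (@fsupp_nat _ _ (l - N3)) => j hj.
by rewrite fsbig1 // => n _; apply: HF; lia.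
Qed.

End ConvolutionSupports.

Lemma signzD (a b : int) : (-1 : C) ^ (a + b) = (-1) ^ a * (-1) ^ b.
Proof. by rewrite expfzDr // oppr_eq0 oner_eq0. Qed.

Lemma signzK (a : int) : (-1 : C) ^ a * (-1) ^ a = 1.
Proof. by rewrite -exprzMl ?unitrN1 // mulrN1 opprK exp1rz. Qed.

Lemma signzDB (i n : int) (j : nat) :
  (-1 : C) ^ (n + j%:Z) * (-1) ^ (i - n) = (-1) ^ i * (-1) ^+ j.
Proof.
have h : (-1 : C) ^ n * (-1) ^ (- n) = 1 by rewrite -signzD addrN expr0z.
rewrite !signzD -exprnP.
transitivity ((-1 : C) ^ i * (-1) ^+ j * ((-1) ^ n * (-1) ^ (- n))); first ring.
by rewrite h mulr1.
Qed.

Section CoactionTwistingOperator.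
Variables (H U V : lmodType C)
  (vacH : H) (YH : H -> H -> int -> H) (Delta : H -> seq (H * H)) (eps : H -> C)
  (vacU : U) (YU : U -> U -> int -> U) (YHU : H -> U -> int -> U)
  (vacV : V) (YV : V -> V -> int -> V) (rho : V -> seq (H * V))
  (R : V -> U -> seq (U * V * (int -> C))).

Hypothesis YU_lin : forall k, bilin (fun a b => YU a b k).
Hypothesis YU_tr : forall a b, trunc (YU a b).
Hypothesis YV_lin : forall k, bilin (fun a b => YV a b k).
Hypothesis YV_tr : forall a b, trunc (YV a b).
Hypothesis YH_tr : forall a b, trunc (YH a b).
Hypothesis YHU_lin : forall k, bilin (fun a w => YHU a w k).
Hypothesis YHU_tr : forall a w, trunc (YHU a w).
Hypothesis YHU_assoc : weak_assoc YH YHU.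
Hypothesis YHU_span : forall h u, exists s : seq (U * (int -> C)),
  forall k, YHU h u k = \sum_(t <- s) t.2 k *: t.1.
Hypothesis YHU_vacU : forall h k, YHU h vacU k = if k == 0 then eps h *: vacU else 0.
Hypothesis YHU_vacH : forall w k, YHU vacH w k = if k == 0 then w else 0.
Hypothesis YHU_YU : forall h u u' (a c : int),
  YHU h (YU u u' c) a = \sum_(p <- Delta h) modalg_rhs YU YHU p.1 p.2 u u' a c.
Hypothesis rho_lin : forall (c : C) v v', tensor2_eq (rho (c *: v + v'))
  ([seq (c *: p.1, p.2) | p <- rho v] ++ rho v').
Hypothesis rho_coass : forall v,
  tensor3_eq [seq (p.1, q.1, q.2) | p <- rho v, q <- rho p.2]
             [seq (q.1, q.2, p.2) | p <- rho v, q <- Delta p.1].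
Hypothesis rho_counit : forall v, \sum_(p <- rho v) eps p.1 *: p.2 = v.
Hypothesis rho_vac : tensor2_eq (rho vacV) [:: (vacH, vacV)].
Hypothesis rho_YV : forall v v' (k : int) (Z : lmodType C) (f : H -> V -> Z), bilin f ->
  \sum_(p <- rho (YV v v' k)) f p.1 p.2
  = \sum_(p <- rho v) \sum_(q <- rho v') tprodY YH YV f p.1 p.2 q.1 q.2 k.
Hypothesis R_tr : forall v u t, List.In t (R v u) -> trunc t.2.
Hypothesis R_rho : forall (Z : lmodType C) (g : U -> V -> Z), bilin g -> forall v u (k : int),
  Rtest R g v u k = \sum_(p <- rho v) ((-1) ^ k) *: g (YHU p.1 u k) p.2.

Let linU1 k b : lin (fun a => YU a b k) := (YU_lin k).1 b.
Let linU2 k a : lin (fun b => YU a b k) := (YU_lin k).2 a.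
Let linV1 k b : lin (fun a => YV a b k) := (YV_lin k).1 b.
Let linV2 k a : lin (fun b => YV a b k) := (YV_lin k).2 a.
Let linHU1 k w : lin (fun a => YHU a w k) := (YHU_lin k).1 w.
Let linHU2 k a : lin (fun w => YHU a w k) := (YHU_lin k).2 a.

Lemma lin_sum_rho (Z : lmodType C) (F : H -> V -> Z) : bilin F ->
  lin (fun v => \sum_(p <- rho v) F p.1 p.2).
Proof.
move=> HF c v v'; rewrite (@rho_lin c v v' _ F HF) big_cat big_map /= scaler_sumr.
by congr (_ + _); apply: eq_bigr => p _; rewrite (linZ (HF.1 _)).
Qed.

Lemma bilin_YHU_sign (Z : lmodType C) (g : U -> V -> Z) (u : U) (k : int) :
  bilin g -> bilin (fun h w => ((-1) ^ k) *: g (YHU h u k) w).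
Proof.
move=> Hg; split => [w|h]; apply: linZl; last exact: Hg.2.
exact: (lin_comp (linHU1 k u) (Hg.1 w)).
Qed.

Lemma Rtest_bilin (Z : lmodType C) (g : U -> V -> Z) : bilin g ->
  forall k, bilin (fun v u => Rtest R g v u k).
Proof.
move=> Hg k; split => [u|v].
  apply: (eq_lin (fun v => R_rho Hg v u k)).
  exact: (lin_sum_rho (bilin_YHU_sign u k Hg)).
apply: (eq_lin (R_rho Hg v ^~ k)).
by apply: lin_sumr => p; apply: linZl; apply: (lin_comp (linHU2 k p.1) (Hg.1 p.2)).
Qed.

Lemma Rtest_vacU (Z : lmodType C) (g : U -> V -> Z) : bilin g ->
  forall v k, Rtest R g v vacU k = if k == 0 then g vacU v else 0.
Proof.
move=> Hg v k; rewrite R_rho //.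
under eq_bigr do rewrite YHU_vacU.
case: eqP => [->|_].
  under eq_bigr do rewrite expr0z scale1r (linZ (Hg.1 _)) -(linZ (Hg.2 _)).
  by rewrite -(lin_sum _ _ (Hg.2 vacU)) rho_counit.
by apply: big1 => p _; rewrite (lin0 (Hg.1 _)) scaler0.
Qed.

Lemma Rtest_vacV (Z : lmodType C) (g : U -> V -> Z) : bilin g ->
  forall u k, Rtest R g vacV u k = if k == 0 then g u vacV else 0.
Proof.
move=> Hg u k; rewrite R_rho // (rho_vac (bilin_YHU_sign u k Hg)).
rewrite big_cons big_nil addr0 /= YHU_vacH.
by case: eqP => [->|_]; rewrite ?expr0z ?scale1r // (lin0 (Hg.1 _)) scaler0.
Qed.

Lemma YU_YHU_trunc (u : U) (h : H) (u' : U) :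
  exists N, forall n m, m < N -> YU u (YHU h u' n) m = 0.
Proof.
have [s Hs] := YHU_span h u'.
have [N HN] := trunc_lincomb s (linU2 ^~ u) (YU_tr u).
by exists N => n m mN; rewrite Hs HN.
Qed.

Section SmashProduct.
Variables (Z : lmodType C) (g : U -> V -> Z).
Hypothesis Hg : bilin g.
Variables (u : U) (v : V) (u' : U) (v' : V) (k : int).

Let g01 b : g 0 b = 0 := lin0 (Hg.1 b).
Let g02 a : g a 0 = 0 := lin0 (Hg.2 a).

Lemma twistedY_term n m :
  \sum_(t <- R v u') ((-1) ^ n * t.2 n) *: g (YU u t.1.1 m) (YV t.1.2 v' (k - n - m))
  = \sum_(p <- rho v) g (YU u (YHU p.1 u' n) m) (YV p.2 v' (k - n - m)).
Proof.
have Hb : bilin (fun a b => g (YU u a m) (YV b v' (k - n - m))).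
  split => [b|a]; first exact: (lin_comp (linU2 m u) (Hg.1 _)).
  exact: (lin_comp (linV1 _ v') (Hg.2 _)).
have := R_rho Hb v u' n; rewrite /Rtest => E.
under eq_bigr do rewrite -scalerA.
rewrite -scaler_sumr E scaler_sumr.
by apply: eq_bigr => p _; rewrite scalerA signzK scale1r.
Qed.

Lemma fsupp_smash_term (h : H) (w : V) :
  let F n m := g (YU u (YHU h u' n) m) (YV w v' (k - n - m)) in
  (forall n, fsupp (F n)) /\ fsupp (fun n => \sum_(m \in [set: int]) F n m).
Proof.
have [N1 H1] := YHU_tr h u'; have [N2 H2] := YU_YHU_trunc u h u'.
have [N3 H3] := YV_tr w v'.
apply: (fsupp_conv (k := k) (Nn := N1) (Nm := N2) (Nr := N3)) => n m.
case: (ltrP n N1) => [hn _|_]; first by rewrite H1 // (lin0 (linU2 _ u)) g01.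
case: (ltrP m N2) => [hm _|_ /= hr]; first by rewrite H2 // g01.
by rewrite H3 // g02.
Qed.

Lemma smash_term_reindex (h : H) (w : V) :
  \sum_(m \in [set: int]) g (\sum_(n \in [set: int]) YU u (YHU h u' n) (m - n))
                            (YV w v' (k - m))
  = \sum_(n \in [set: int]) \sum_(m \in [set: int])
      g (YU u (YHU h u' n) m) (YV w v' (k - n - m)).
Proof.
have [N1 H1] := YHU_tr h u'; have [N2 H2] := YU_YHU_trunc u h u'.
have [N3 H3] := YV_tr w v'.
pose G m n := g (YU u (YHU h u' n) (m - n)) (YV w v' (k - m)).
have G0 m n : (n < N1) || (m - n < N2) || (k - m < N3) -> G m n = 0.
  case: (ltrP n N1) => [hn _|_]; first by rewrite /G H1 // (lin0 (linU2 _ u)) g01.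
  case: (ltrP (m - n) N2) => [hm _|_ /= hr]; first by rewrite /G H2 // g01.
  by rewrite /G H3 // g02.
under eq_fsbigr => m _.
  rewrite (fsum_morph (f := fun x => g x (YV w v' (k - m)))) ?g01 //; first last.
  - apply: (@fsupp_int _ _ N1 (m - N2)) => n hn; first by rewrite H1 // (lin0 (linU2 _ u)).
    by rewrite H2 //; lia.
  - by move=> x y; rewrite (linD (Hg.1 _)).
  over.
rewrite (@exchange_fsum_int _ G (N1 + N2) (k - N3) N1 (k - N3 - N2)); last first.
  by move=> m n; apply: contraNT => hmn; apply/eqP/G0; lia.
apply: eq_fsbigr => n _; rewrite (fsum_shift _ n).
by apply: eq_fsbigr => m _; rewrite /G; congr (g (YU _ _ _) (YV _ _ _)); lia.
Qed.

Lemma smashY_twistedY : smashY YU YV YHU rho g u v u' v' k = twistedY YU YV R g u v u' v' k.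
Proof.
pose X (t : U * V * (int -> C)) n m :=
  ((-1) ^ n * t.2 n) *: g (YU u t.1.1 m) (YV t.1.2 v' (k - n - m)).
have fsX t : List.In t (R v u') ->
    (forall n, fsupp (X t n)) /\ fsupp (fun n => \sum_(m \in [set: int]) X t n m).
  move=> Ht; have [N1 H1] := R_tr Ht; have [N2 H2] := YU_tr u t.1.1.
  have [N3 H3] := YV_tr t.1.2 v'.
  apply: (fsupp_conv (k := k) (Nn := N1) (Nm := N2) (Nr := N3)) => n m.
  case: (ltrP n N1) => [hn _|_]; first by rewrite /X H1 // mulr0 scale0r.
  case: (ltrP m N2) => [hm _|_ /= hr]; first by rewrite /X H2 // g01 scaler0.
  by rewrite /X H3 // g02 scaler0.
rewrite /twistedY (exchange_fsum2_seq (F := X)); first last.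
- by move=> t /fsX [].
- by move=> t /fsX [].
under eq_fsbigr => n _ do under eq_fsbigr => m _ do rewrite twistedY_term.
rewrite -exchange_fsum2_seq; first last.
- by move=> p _; apply: (fsupp_smash_term p.1 p.2).2.
- by move=> p _; apply: (fsupp_smash_term p.1 p.2).1.
by apply: eq_bigr => p _; rewrite smash_term_reindex.
Qed.

End SmashProduct.

Section TwistingWithYU.
Variables (Z : lmodType C) (g : U -> V -> Z).
Hypothesis Hg : bilin g.
Variables (u u' : U) (i l : int).

Let g01 b : g 0 b = 0 := lin0 (Hg.1 b).

Definition modalg_coef (h1 h2 : H) (j : nat) (n : int) :=
  YU (YHU h1 u (n + j%:Z)) (YHU h2 u' (i - n)) (l - j%:Z).

Let c j n := (-1) ^+ j * binz C (n + j%:Z) j.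

Lemma fsupp_modalg_coef (W : zmodType) (h1 h2 : H) (phi : nat -> int -> U -> W) :
  (forall j n, phi j n 0 = 0) ->
  (forall j, fsupp (fun n => phi j n (modalg_coef h1 h2 j n))) /\
  fsupp (fun j => \sum_(n \in [set: int]) phi j n (modalg_coef h1 h2 j n)).
Proof.
move=> phi0.
have [N1 H1] := YHU_tr h1 u; have [N2 H2] := YHU_tr h2 u'.
have [s1 Hs1] := YHU_span h1 u; have [s2 Hs2] := YHU_span h2 u'.
have [N3 H3] := trunc_lincomb2 s1 s2 YU_lin YU_tr.
apply: (fsupp_binom_conv (i := i) (l := l) (N1 := N1) (N2 := N2) (N3 := N3)) => j n.
rewrite /modalg_coef; case: (ltrP (n + j%:Z) N1) => [h _|_].
  by rewrite H1 // (lin0 (linU1 _ _)).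
case: (ltrP (i - n) N2) => [h _|_ /= h]; first by rewrite H2 // (lin0 (linU2 _ _)).
by rewrite Hs1 Hs2 H3.
Qed.

Lemma lin_modalg_rhs (T : lmodType C) (F : T -> H * H) :
  (forall j n, lin (fun x => modalg_coef (F x).1 (F x).2 j n)) ->
  lin (fun x => modalg_rhs YU YHU (F x).1 (F x).2 u u' i l).
Proof.
move=> HF; apply: lin_fsum => [j|x].
  apply: lin_fsum => [n|x]; first exact: linZl (HF j n).
  by apply: ((fsupp_modalg_coef _ _ (phi := fun j n y => c j n *: y) _).1 j) => *; rewrite scaler0.
by apply: (fsupp_modalg_coef _ _ (phi := fun j n y => c j n *: y) _).2 => *; rewrite scaler0.
Qed.

Lemma trilin_modalg_rhs :
  trilin (fun h1 h2 w => ((-1) ^ i) *: g (modalg_rhs YU YHU h1 h2 u u' i l) w).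
Proof.
split; [|split] => [h2 w|h1 w|h1 h2]; apply: linZl; last exact: Hg.2.
  apply: (lin_comp _ (Hg.1 w)).
  apply: (lin_modalg_rhs (F := fun h1 => (h1, h2))) => j n /=; rewrite /modalg_coef.
  exact: (lin_comp (linHU1 _ u) (linU1 _ _)).
apply: (lin_comp _ (Hg.1 w)).
apply: (lin_modalg_rhs (F := fun h2 => (h1, h2))) => j n /=; rewrite /modalg_coef.
exact: (lin_comp (linHU1 _ u') (linU2 _ _)).
Qed.

(* The module-algebra axiom expands Y(h_i,-x1)Y(u,x2)u' along Delta(h_i);
   coassociativity of rho turns sum_i Delta(h_i) (x) v_i into
   sum_i sum_k h_i (x) h'_ik (x) v'_ik with rho(v_i) = sum_k h'_ik (x) v'_ik. *)
Lemma Rtest_YU_expand v : Rtest R g v (YU u u' l) i =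
  \sum_(p <- rho v) \sum_(q <- rho p.2) \sum_(j \in [set: nat]) \sum_(n \in [set: int])
     ((-1) ^ i * c j n) *: g (modalg_coef p.1 q.1 j n) q.2.
Proof.
pose Phi h1 h2 w := ((-1) ^ i) *: g (modalg_rhs YU YHU h1 h2 u u' i l) w.
transitivity (\sum_(p <- rho v) \sum_(q <- rho p.2) Phi p.1 q.1 q.2).
  have := @rho_coass v Z Phi trilin_modalg_rhs; rewrite !big_allpairs_dep /= => ->.
  rewrite R_rho //; apply: eq_bigr => p _.
  by rewrite YHU_YU (lin_sum _ _ (Hg.1 _)) scaler_sumr.
apply: eq_bigr => p _; apply: eq_bigr => q _.
have morph (T : choiceType) (F : T -> U) : fsupp F ->
    (-1) ^ i *: g (\sum_(x \in [set: T]) F x) q.2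
    = \sum_(x \in [set: T]) (-1) ^ i *: g (F x) q.2.
  apply: (fsum_morph (f := fun z => (-1) ^ i *: g z q.2)) => [|x y]; first by rewrite g01 scaler0.
  by rewrite (linD (Hg.1 _)) scalerDr.
have [fs_n fs_j] := fsupp_modalg_coef p.1 q.1 (phi := fun j n y => c j n *: y)
  (fun _ _ => scaler0 _ _).
rewrite /Phi (morph _ _ fs_j); apply: eq_fsbigr => j _; rewrite (morph _ _ (fs_n j)).
by apply: eq_fsbigr => n _; rewrite (linZ (Hg.1 _)) scalerA.
Qed.

Lemma twist3_rhs_coef v (j : nat) (n : int) :
  \sum_(t <- R v u) \sum_(s <- R t.1.2 u')
     (binz C (n + j%:Z) j * t.2 (n + j%:Z) * s.2 (i - n)) *:
       g (YU t.1.1 s.1.1 (l - j%:Z)) s.1.2 =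
  \sum_(p <- rho v) \sum_(q <- rho p.2)
     (binz C (n + j%:Z) j * (-1) ^ (n + j%:Z) * (-1) ^ (i - n)) *:
       g (modalg_coef p.1 q.1 j n) q.2.
Proof.
pose Psi a w :=
  \sum_(q <- rho w) (-1) ^ (i - n) *: g (YU a (YHU q.1 u' (i - n)) (l - j%:Z)) q.2.
have inner (t : U * V * (int -> C)) :
    \sum_(s <- R t.1.2 u') (binz C (n + j%:Z) j * t.2 (n + j%:Z) * s.2 (i - n)) *:
       g (YU t.1.1 s.1.1 (l - j%:Z)) s.1.2 =
    (binz C (n + j%:Z) j * t.2 (n + j%:Z)) *: Psi t.1.1 t.1.2.
  have Hb : bilin (fun a w => g (YU t.1.1 a (l - j%:Z)) w).
    by split => [w|a]; [exact: (lin_comp (linU2 _ _) (Hg.1 w)) | exact: Hg.2].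
  have := R_rho Hb t.1.2 u' (i - n); rewrite /Rtest => E.
  by rewrite /Psi -E scaler_sumr; apply: eq_bigr => s _; rewrite scalerA.
have HPsi : bilin Psi.
  split => [w|a].
    by apply: lin_sumr => q; apply: linZl; apply: (lin_comp (linU1 _ _) (Hg.1 _)).
  apply: (lin_sum_rho (F := fun h w =>
    (-1) ^ (i - n) *: g (YU a (YHU h u' (i - n)) (l - j%:Z)) w)).
  split => [w|h]; apply: linZl; last exact: Hg.2.
  exact: (lin_comp (linHU1 _ u') (lin_comp (linU2 _ a) (Hg.1 w))).
have := R_rho HPsi v u (n + j%:Z); rewrite /Rtest => E.
under eq_bigr do rewrite inner -scalerA.
rewrite -scaler_sumr E scaler_sumr; apply: eq_bigr => p _.
rewrite /Psi !scaler_sumr; apply: eq_bigr => q _.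
by rewrite !scalerA /modalg_coef mulrA.
Qed.

Lemma Rtest_YU v : Rtest R g v (YU u u' l) i = twist3_rhs YU R g v u u' i l.
Proof.
pose X (t s : U * V * (int -> C)) (j : nat) (n : int) :=
  (binz C (n + j%:Z) j * t.2 (n + j%:Z) * s.2 (i - n)) *:
     g (YU t.1.1 s.1.1 (l - j%:Z)) s.1.2.
pose Y (p q : H * V) (j : nat) (n : int) :=
  (binz C (n + j%:Z) j * (-1) ^ (n + j%:Z) * (-1) ^ (i - n)) *:
     g (modalg_coef p.1 q.1 j n) q.2.
have fsX t s : List.In t (R v u) -> List.In s (R t.1.2 u') ->
    (forall j, fsupp (X t s j)) /\ fsupp (fun j => \sum_(n \in [set: int]) X t s j n).
  move=> Ht Hs.
  have [Nt HNt] := R_tr Ht; have [Ns HNs] := R_tr Hs; have [NU HU] := YU_tr t.1.1 s.1.1.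
  apply: (fsupp_binom_conv (i := i) (l := l) (N1 := Nt) (N2 := Ns) (N3 := NU)) => j n.
  case: (ltrP (n + j%:Z) Nt) => [h _|_]; first by rewrite /X HNt ?mulr0 ?mul0r ?scale0r.
  case: (ltrP (i - n) Ns) => [h _|_ /= h]; first by rewrite /X HNs ?mulr0 ?scale0r.
  by rewrite /X HU ?g01 ?scaler0.
have fsY p q : (forall j, fsupp (Y p q j)) /\ fsupp (fun j => \sum_(n \in [set: int]) Y p q j n).
  apply: (fsupp_modalg_coef p.1 q.1
    (phi := fun j n x => (binz C (n + j%:Z) j * (-1) ^ (n + j%:Z) * (-1) ^ (i - n)) *: g x q.2)).
  by move=> j n; rewrite g01 scaler0.
transitivity (\sum_(p <- rho v) \sum_(q <- rho p.2)
    \sum_(j \in [set: nat]) \sum_(n \in [set: int]) Y p q j n).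
  rewrite Rtest_YU_expand; apply: eq_bigr => p _; apply: eq_bigr => q _.
  apply: eq_fsbigr => j _; apply: eq_fsbigr => n _; rewrite /Y /c; congr (_ *: _).
  by rewrite -mulrA signzDB; ring.
rewrite (exchange_fsum2_seq2 (F := Y)) //; apply/esym.
rewrite /twist3_rhs (exchange_fsum2_seq2 (F := X)) //.
by apply: eq_fsbigr => j _; apply: eq_fsbigr => n _; rewrite /X twist3_rhs_coef.
Qed.

End TwistingWithYU.

Section TwistingWithYV.
Variables (Z : lmodType C) (g : U -> V -> Z).
Hypothesis Hg : bilin g.
Variables (u : U) (i l : int).

Let g01 b : g 0 b = 0 := lin0 (Hg.1 b).
Let g02 a : g a 0 = 0 := lin0 (Hg.2 a).

Definition action2_coef (a b : H) (j : nat) (n : int) :=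
  YHU a (YHU b u (i - n)) (n + j%:Z).

Lemma fsupp_action2_coef (a b : H) (w1 w2 : V) (c : nat -> int -> C) :
  let F j n := c j n *: g (action2_coef a b j n) (YV w1 w2 (l - j%:Z)) in
  (forall j, fsupp (F j)) /\ fsupp (fun j => \sum_(n \in [set: int]) F j n).
Proof.
have [NA HA] := YHU2_trunc_outer YHU_lin YHU_tr YHU_span a b u.
have [Nb HB] := YHU2_trunc_inner YHU_lin YHU_tr a b u.
have [NV HV] := YV_tr w1 w2.
apply: (fsupp_binom_conv (i := i) (l := l) (N1 := NA) (N2 := Nb) (N3 := NV)) => j n.
rewrite /action2_coef; case: (ltrP (n + j%:Z) NA) => [h _|_].
  by rewrite HA ?g01 ?scaler0.
case: (ltrP (i - n) Nb) => [h _|_ /= h]; first by rewrite HB ?g01 ?scaler0.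
by rewrite HV ?g02 ?scaler0.
Qed.

(* Multiplicativity of rho, then associativity of the H-action. *)
Lemma Rtest_YV_expand v v' : Rtest R g (YV v v' l) u i =
  \sum_(p <- rho v) \sum_(q <- rho v') \sum_(j \in [set: nat]) \sum_(n \in [set: int])
     ((-1) ^ i * binz C (n + j%:Z) j) *: g (action2_coef p.1 q.1 j n) (YV p.2 q.2 (l - j%:Z)).
Proof.
rewrite R_rho // (rho_YV _ _ _ (bilin_YHU_sign u i Hg)).
apply: eq_bigr => p _; apply: eq_bigr => q _; rewrite /tprodY.
have [NA HA] := YHU2_trunc_outer YHU_lin YHU_tr YHU_span p.1 q.1 u.
have [Nb HB] := YHU2_trunc_inner YHU_lin YHU_tr p.1 q.1 u.
under eq_fsbigr => m _.
  rewrite (module_assoc YHU_lin YHU_tr YH_tr YHU_assoc YHU_span).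
  rewrite (fsum_morph (f := fun x => (-1) ^ i *: g x (YV p.2 q.2 (l - m)))) ?g01 ?scaler0 //; first last.
  - apply: (@fsupp_int _ _ (NA - m) (i - Nb)) => s hs; first by rewrite HA ?scaler0 //; lia.
    by rewrite HB ?scaler0 //; lia.
  - by move=> x y; rewrite (linD (Hg.1 _)) scalerDr.
  over.
rewrite fsum_int_nat; last first.
  by move=> m m0; rewrite fsbig1 // => s _; rewrite binomz_neg // scale0r g01 scaler0.
apply: eq_fsbigr => j _; apply: eq_fsbigr => n _.
by rewrite (linZ (Hg.1 _)) scalerA /action2_coef [(j%:Z + n)]addrC.
Qed.

Lemma twist4_rhs_coef v v' (j : nat) (n : int) :
  \sum_(t <- R v' u) \sum_(s <- R v t.1.1)
     ((-1) ^+ j * binz C (n + j%:Z) j * s.2 (n + j%:Z) * t.2 (i - n)) *: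
       g s.1.1 (YV s.1.2 t.1.2 (l - j%:Z)) =
  \sum_(q <- rho v') \sum_(p <- rho v)
     ((-1) ^ (i - n) * ((-1) ^+ j * binz C (n + j%:Z) j) * (-1) ^ (n + j%:Z)) *:
        g (action2_coef p.1 q.1 j n) (YV p.2 q.2 (l - j%:Z)).
Proof.
set c := (-1) ^+ j * binz C (n + j%:Z) j.
pose Psi a w := c *: \sum_(p <- rho v) (-1) ^ (n + j%:Z) *:
   g (YHU p.1 a (n + j%:Z)) (YV p.2 w (l - j%:Z)).
have inner (t : U * V * (int -> C)) :
    \sum_(s <- R v t.1.1) (c * s.2 (n + j%:Z) * t.2 (i - n)) *:
       g s.1.1 (YV s.1.2 t.1.2 (l - j%:Z)) = t.2 (i - n) *: Psi t.1.1 t.1.2.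
  have Hb : bilin (fun a b => g a (YV b t.1.2 (l - j%:Z))).
    by split => [b|a]; [exact: Hg.1 | exact: (lin_comp (linV1 _ _) (Hg.2 _))].
  have := R_rho Hb v t.1.1 (n + j%:Z); rewrite /Rtest => E.
  rewrite /Psi -E !scaler_sumr; apply: eq_bigr => s _.
  by rewrite !scalerA; congr (_ *: _); ring.
have HPsi : bilin Psi.
  split => [w|a]; apply: linZl; apply: lin_sumr => p; apply: linZl.
    exact: (lin_comp (linHU2 _ _) (Hg.1 _)).
  exact: (lin_comp (linV2 _ _) (Hg.2 _)).
have := R_rho HPsi v' u (i - n); rewrite /Rtest => E.
under eq_bigr do rewrite inner.
rewrite E; apply: eq_bigr => q _.
rewrite /Psi !scaler_sumr; apply: eq_bigr => p _.
by rewrite !scalerA /action2_coef.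
Qed.

Lemma Rtest_YV v v' : Rtest R g (YV v v' l) u i = twist4_rhs YV R g v v' u i l.
Proof.
pose X (t s : U * V * (int -> C)) (j : nat) (n : int) :=
  ((-1) ^+ j * binz C (n + j%:Z) j * s.2 (n + j%:Z) * t.2 (i - n)) *:
     g s.1.1 (YV s.1.2 t.1.2 (l - j%:Z)).
pose Y (q p : H * V) (j : nat) (n : int) :=
  ((-1) ^ (i - n) * ((-1) ^+ j * binz C (n + j%:Z) j) * (-1) ^ (n + j%:Z)) *:
     g (action2_coef p.1 q.1 j n) (YV p.2 q.2 (l - j%:Z)).
have fsX t s : List.In t (R v' u) -> List.In s (R v t.1.1) ->
    (forall j, fsupp (X t s j)) /\ fsupp (fun j => \sum_(n \in [set: int]) X t s j n).
  move=> Ht Hs.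
  have [Nt HNt] := R_tr Ht; have [Ns HNs] := R_tr Hs; have [NV HV] := YV_tr s.1.2 t.1.2.
  apply: (fsupp_binom_conv (i := i) (l := l) (N1 := Ns) (N2 := Nt) (N3 := NV)) => j n.
  case: (ltrP (n + j%:Z) Ns) => [h _|_]; first by rewrite /X HNs ?mulr0 ?mul0r ?scale0r.
  case: (ltrP (i - n) Nt) => [h _|_ /= h]; first by rewrite /X HNt ?mulr0 ?scale0r.
  by rewrite /X HV ?g02 ?scaler0.
have fsY q p : (forall j, fsupp (Y q p j)) /\ fsupp (fun j => \sum_(n \in [set: int]) Y q p j n).
  exact: fsupp_action2_coef.
transitivity (\sum_(q <- rho v') \sum_(p <- rho v)
    \sum_(j \in [set: nat]) \sum_(n \in [set: int]) Y q p j n).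
  rewrite Rtest_YV_expand exchange_big; apply: eq_bigr => q _; apply: eq_bigr => p _.
  apply: eq_fsbigr => j _; apply: eq_fsbigr => n _; rewrite /Y; congr (_ *: _).
  set b := binz C _ _.
  transitivity ((-1) ^ i * b * ((-1) ^+ j * (-1) ^+ j)); first by rewrite exprnP signzK mulr1.
  transitivity (b * ((-1) ^ (n + j%:Z) * (-1) ^ (i - n)) * (-1) ^+ j); first by rewrite signzDB; ring.
  ring.
rewrite (exchange_fsum2_seq2 (F := Y)) //; apply/esym.
rewrite /twist4_rhs (exchange_fsum2_seq2 (F := X)) //.
by apply: eq_fsbigr => j _; apply: eq_fsbigr => n _; rewrite /X twist4_rhs_coef.
Qed.

End TwistingWithYV.

Lemma coaction_twisting_operator : twisting_operator vacU YU vacV YV R.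
Proof.
split; first exact: R_tr.
split; first exact: Rtest_bilin.
split; first exact: Rtest_vacU.
split; first exact: Rtest_vacV.
by split => Z g Hg *; [apply: Rtest_YU | apply: Rtest_YV].
Qed.

End CoactionTwistingOperator.

Theorem proposition4p4
  (H U V : lmodType C)
  (vacH : H) (YH : H -> H -> int -> H) (Delta : H -> seq (H * H)) (eps : H -> C)
  (vacU : U) (YU : U -> U -> int -> U) (YHU : H -> U -> int -> U)
  (vacV : V) (YV : V -> V -> int -> V) (rho : V -> seq (H * V))
  (R : V -> U -> seq (U * V * (int -> C))) :
  nv_bialgebra vacH YH Delta eps ->
  module_algebra vacH YH Delta eps vacU YU YHU ->
  comodule_algebra vacH YH Delta eps vacV YV rho ->
  is_R_of_coaction YHU rho R ->
  twisting_operator vacU YU vacV YV R /\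
  (forall (Z : lmodType C) (g : U -> V -> Z), bilin g ->
     forall (u : U) (v : V) (u' : U) (v' : V) (k : int),
       smashY YU YV YHU rho g u v u' v' k = twistedY YU YV R g u v u' v' k).
Proof.
move=> [[_ YH_tr _ _ _] _].
move=> [[YU_lin YU_tr _ _ _] [[YHU_lin YHU_tr YHU_vacH YHU_assoc] [YHU_fin [YHU_vacU YHU_YU]]]].
move=> [[YV_lin YV_tr _ _ _] [[rho_lin [rho_coass rho_counit]] [rho_vac rho_YV]]].
move=> [R_tr R_rho].
have YHU_span h u : exists s : seq (U * (int -> C)),
    forall k, YHU h u k = \sum_(t <- s) t.2 k *: t.1.
  by have [s [_ Hs]] := YHU_fin h u; exists s.
split; first by apply: coaction_twisting_operator.
by move=> Z g Hg *; apply: smashY_twistedY.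
Qed.
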